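(* Let $d, N$ be positive integers and $r \ge 2$ an integer, let $\|\cdot\|$ be any norm on $\mathbb{R}^d$ with unit ball $B = \{v \in \mathbb{R}^d : \|v\| \le 1\}$, and let $V_1, \dots, V_N$ be finite subsets of $B$ with $|V_i| \ge r$ for all $i \in [N]$. Then for every $k \in [r]$ there are subsets $U_i \subseteq V_i$, $i \in [N]$, with $|U_i| = k$ for all $i$, such that \[ \max_{n \in [N]} \Big\| \sum_{i \in [n]} \Big( \sum_{v \in U_i} v - \frac{k}{|V_i|} \sum_{v \in V_i} v \Big) \Big\| \le 2d. \]
   Context: $[n] = \{1, \dots, n\}$. *)

From HB Require Import structures.
From mathcomp Require Import all_boot all_order all_algebra finmap.
From mathcomp Require Import reals.
Set Implicit Arguments. Unset Strict Implicit. Unset Printing Implicit Defensive.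
Import Order.TTheory GRing.Theory Num.Theory.
Local Open Scope ring_scope.

(* nrm is a norm on the real vector space 'rV[R]_d (nonnegativity follows). *)
Definition is_norm (R : realType) (d : nat) (nrm : 'rV[R]_d -> R) : Prop :=
  [/\ forall x y, nrm (x + y) <= nrm x + nrm y,
      forall (a : R) x, nrm (a *: x) = `|a| * nrm x
    & forall x, nrm x = 0 -> x = 0].

From HB Require Import structures.
From mathcomp Require Import all_boot all_order all_algebra finmap.
From mathcomp Require Import reals.
From mathcomp Require Import zify lra.
Set Implicit Arguments. Unset Strict Implicit. Unset Printing Implicit Defensive.
Import Order.TTheory GRing.Theory Num.Theory.
Local Open Scope ring_scope.

(* Iterated rounding, in the manner of Barany and Grinberg.  Give weight
   x0 = k/|V_i| to every v in V_i; the n-th prefix sum of the statement is then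
   the sum over the first n groups of (e - x0) v, for the 0/1 indicator e of the
   sets U_i.  Process the groups one at a time: at stage n, move the current
   point x of the unit cube, changing only fractional coordinates and keeping
   all group sums and the weighted vector sum over the first n groups, until at
   most 2d of its coordinates in these groups are fractional.  This is possible
   because a group meeting the fractional support meets it twice (its sum is
   an integer), so the d vector constraints and the group constraints are
   fewer than the fractional coordinates, leaving a direction of motion.
   Integral coordinates are never changed again, so the final 0/1 point e
   differs from the stage-n point on at most 2d vectors of norm at most 1 in
   the first n groups, and the n-th prefix discrepancy is at most 2d. *)

Lemma nontrivial_left_kernel (F : fieldType) m n (M : 'M[F]_(m, n)) : (n < m)%N ->
  exists2 u : 'rV_m, u != 0 & u *m M = 0.
Proof.
move=> lt_nm; have /rowV0Pn[u /sub_kermxP uM u_neq0] : kermx M != 0.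
  by rewrite -mxrank_eq0 mxrank_ker subn_eq0 -ltnNge (leq_ltn_trans (rank_leq_col M)).
by exists u.
Qed.

Lemma linear_dependence (F : fieldType) (I : finType) p (A : {set I})
    (phi : I -> 'rV[F]_p) : (p < #|A|)%N ->
  exists y : I -> F, [/\ exists a, y a != 0, forall a, a \notin A -> y a = 0
                       & \sum_a y a *: phi a = 0].
Proof.
move=> lt_pA.
have [u u_neq0 uM] := nontrivial_left_kernel (\matrix_(j < #|A|) phi (enum_val j)) lt_pA.
pose y a := \sum_(j | enum_val j == a) u 0 j.
have y_enum j : y (enum_val j) = u 0 j.
  by rewrite /y (big_pred1 j) // => j'; rewrite (inj_eq enum_val_inj).
exists y; split.
- have /existsP[j uj] : [exists j, u 0 j != 0].
    apply: contraNT u_neq0 => /existsPn u0; apply/eqP/rowP => j.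
    by rewrite mxE; apply/eqP/negbNE/u0.
  by exists (enum_val j); rewrite y_enum.
- move=> a aA; apply: big1 => j /eqP ej.
  by move: aA; rewrite -ej enum_valP.
- rewrite -[RHS]uM mulmx_sum_row (partition_big enum_val xpredT) //=.
  apply: eq_bigr => a _; rewrite scaler_suml; apply: eq_bigr => j /eqP <-.
  by rewrite rowK.
Qed.

Lemma sum_eq_off (I : finType) (M : zmodType) (B : {set I}) (P Q : pred I)
    (f g : I -> M) :
  (forall a, a \in B -> P a) -> (forall a, a \notin B -> f a = g a) ->
  \sum_(a | Q a) f a = \sum_(a | Q a) g a ->
  \sum_(a | P a && Q a) f a = \sum_(a | P a && Q a) g a.
Proof.
move=> BP fg eq_fg; apply/eqP; rewrite -subr_eq0 -sumrB.
have <- : \sum_(a | Q a) (f a - g a) = \sum_(a | P a && Q a) (f a - g a).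
  rewrite (bigID P) /= addrC big1 ?add0r; first by apply: eq_bigl => a; rewrite andbC.
  move=> a /andP[_ nPa]; rewrite fg ?subrr //; apply: contra nPa; exact: BP.
by rewrite sumrB eq_fg subrr.
Qed.

Lemma nfrac01 (R : realDomainType) (z : R) :
  0 <= z <= 1 -> ~~ (0 < z < 1) -> z = 0 \/ z = 1.
Proof.
case/andP=> z_ge0 z_le1; rewrite negb_and -!leNgt => /orP[z_le0|z_ge1].
  by left; apply: le_anti; rewrite z_le0.
by right; apply: le_anti; rewrite z_le1.
Qed.

Section Rounding.
Variables (R : realType) (d : nat) (I G : finType) (grp : I -> G) (vec : I -> 'rV[R]_d).

Definition unit_cube (x : I -> R) := forall a, 0 <= x a <= 1.

Definition frac_supp (A : {set I}) (x : I -> R) := [set a in A | 0 < x a < 1].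

Definition keeps_integral (x e : I -> R) := forall a, ~~ (0 < x a < 1) -> e a = x a.

Definition integral_group_sums (A : {set I}) (x : I -> R) :=
  forall h, \sum_(a in A | grp a == h) x a \is a Num.int.

Lemma frac_fiber_int A x h : unit_cube x -> integral_group_sums A x ->
  \sum_(a in frac_supp A x | grp a == h) x a \is a Num.int.
Proof.
move=> x01 xZ; have := xZ h; rewrite (bigID (mem (frac_supp A x))) /= rpredDr.
  rewrite (eq_bigl (fun a => (a \in frac_supp A x) && (grp a == h))) // => a.
  by rewrite /frac_supp inE; case: (a \in A) => //=; exact: andbC.
apply: rpred_sum => a /andP[/andP[aA _] aF].
have xa_int : ~~ (0 < x a < 1) by move: aF; rewrite inE aA.
by have [->|->] := nfrac01 (x01 a) xa_int; rewrite ?rpred0 ?rpred1.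
Qed.

Lemma frac_fiber_card A x a0 : unit_cube x -> integral_group_sums A x ->
  a0 \in frac_supp A x -> (2 <= #|[set a in frac_supp A x | grp a == grp a0]|)%N.
Proof.
move=> x01 xZ a0F; rewrite leqNgt; apply/negP => small.
have fiber1 : [set a in frac_supp A x | grp a == grp a0] = [set a0].
  by apply/esym/eqP; rewrite eqEcard sub1set inE a0F eqxx cards1 /=; lia.
have := frac_fiber_int (grp a0) x01 xZ.
rewrite (eq_bigl (fun a => a \in [set a0])) ?big_set1 => [a0Z|a]; last first.
  by rewrite -fiber1 inE.
have /andP[xa0_gt0 xa0_lt1] : 0 < x a0 < 1 by move: a0F; rewrite inE => /andP[].
by have := norm_intr_ge1 a0Z (lt0r_neq0 xa0_gt0); rewrite gtr0_norm //; lra.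
Qed.

Lemma frac_groups_card A x : unit_cube x -> integral_group_sums A x ->
  (2 * #|grp @: frac_supp A x| <= #|frac_supp A x|)%N.
Proof.
move=> x01 xZ; rewrite -[#|frac_supp A x|]sum1_card.
rewrite (partition_big grp (mem (grp @: frac_supp A x))).
  rewrite mulnC -sum_nat_const leq_sum // => _ /imsetP[a0 a0F ->].
  by rewrite sum1dep_card frac_fiber_card.
by move=> a aF; exact: imset_f.
Qed.

Lemma balanced_direction A x : unit_cube x -> integral_group_sums A x ->
  (2 * d < #|frac_supp A x|)%N ->
  exists y : I -> R, [/\ exists a, y a != 0,
    forall a, a \notin frac_supp A x -> y a = 0,
    \sum_a y a *: vec a = 0 & forall h, \sum_(a | grp a == h) y a = 0].
Proof.
move=> x01 xZ large; set H := grp @: frac_supp A x.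
pose phi a := row_mx (vec a) (\row_(c < #|H|) (grp a == enum_val c)%:R).
have [|y [y_neq0 y_supp y_phi]] := linear_dependence (A := frac_supp A x) phi.
  by have := frac_groups_card x01 xZ; rewrite -/H; lia.
exists y; split => // [|h].
  transitivity (lsubmx (\sum_a y a *: phi a)); last by rewrite y_phi linear0.
  by rewrite linear_sum; apply: eq_bigr => a _; rewrite linearZ /= row_mxKl.
have [hH|hH] := boolP (h \in H); last first.
  apply: big1 => a /eqP ah; apply: y_supp; apply: contra hH => aF.
  by rewrite -ah imset_f.
transitivity (rsubmx (\sum_a y a *: phi a) 0 (enum_rank_in hH h)).
  rewrite linear_sum summxE big_mkcond; apply: eq_bigr => a _.
  by rewrite linearZ /= row_mxKr !mxE enum_rankK_in //; case: eqP; rewrite ?mulr1 ?mulr0.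
by rewrite y_phi linear0 mxE.
Qed.

Definition exit_time (z y : R) := (if 0 < y then 1 - z else z) / `|y|.

Lemma exit_time_gt0 z y : 0 < z < 1 -> y != 0 -> 0 < exit_time z y.
Proof.
by case/andP=> z_gt0 z_lt1 y_neq0; rewrite divr_gt0 ?normr_gt0 //; case: ifP; lra.
Qed.

Lemma exit_time_in01 z y t : 0 < z < 1 -> y != 0 ->
  0 <= t <= exit_time z y -> 0 <= z + t * y <= 1.
Proof.
case/andP=> z_gt0 z_lt1; rewrite /exit_time neq_lt => /orP[y_lt0|y_gt0].
  by rewrite lt_gtF // ltr0_norm // ler_pdivlMr ?oppr_gt0 // => /andP[t_ge0 t_le]; nra.
by rewrite y_gt0 gtr0_norm // ler_pdivlMr // => /andP[t_ge0 t_le]; nra.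
Qed.

Lemma exit_time_hits z y : y != 0 ->
  (z + exit_time z y * y == 0) || (z + exit_time z y * y == 1).
Proof.
rewrite /exit_time neq_lt => /orP[y_lt0|y_gt0].
  by rewrite (lt_gtF y_lt0) ltr0_norm // divrN mulNr divfK ?ltr0_neq0 // subrr eqxx.
by rewrite y_gt0 gtr0_norm // divfK ?lt0r_neq0 // subrKC eqxx orbT.
Qed.

Lemma step_shrinks_frac_supp A x y : unit_cube x -> (exists a, y a != 0) ->
  (forall a, y a != 0 -> a \in frac_supp A x) ->
  exists t, unit_cube (fun a => x a + t * y a) /\
            frac_supp A (fun a => x a + t * y a) \proper frac_supp A x.
Proof.
move=> x01 [a1 ya1] y_supp.
have x_frac a : y a != 0 -> 0 < x a < 1 by move/y_supp; rewrite inE => /andP[].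
have [a2 /= ya2 a2_min] := arg_minP (fun a => exit_time (x a) (y a))
                             (ya1 : a1 \in [pred a | y a != 0]).
exists (exit_time (x a2) (y a2)); split.
  move=> a; have [->|ya] := eqVneq (y a) 0; first by rewrite mulr0 addr0.
  apply: (exit_time_in01 (x_frac _ ya) ya).
  by rewrite ltW ?exit_time_gt0 ?x_frac //= a2_min.
apply: sub_proper_trans (properD1 (y_supp _ ya2)).
apply/subsetP => a a_new; rewrite in_setD1; apply/andP; split.
  apply: contraTneq a_new => ->; rewrite inE negb_and; apply/orP; right.
  by case/orP: (exit_time_hits (x a2) ya2) => /eqP->; rewrite ?ltxx ?andbF.
have [ya0|/y_supp//] := eqVneq (y a) 0.
by move: a_new; rewrite !inE ya0 mulr0 addr0.
Qed.

Lemma shrink_frac_supp A x : unit_cube x -> integral_group_sums A x ->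
  (2 * d < #|frac_supp A x|)%N ->
  exists x', [/\ unit_cube x', forall a, a \notin frac_supp A x -> x' a = x a,
    \sum_a x' a *: vec a = \sum_a x a *: vec a,
    forall h, \sum_(a | grp a == h) x' a = \sum_(a | grp a == h) x a &
    frac_supp A x' \proper frac_supp A x].
Proof.
move=> x01 xZ large.
have [y [y_neq0 y_supp y_vec y_grp]] := balanced_direction x01 xZ large.
have y_frac a : y a != 0 -> a \in frac_supp A x.
  by apply: contraNT => /y_supp ->.
have [t [xt01 xt_proper]] := step_shrinks_frac_supp x01 y_neq0 y_frac.
exists (fun a => x a + t * y a); split => // [a /y_supp->|| h].
- by rewrite mulr0 addr0.
- under eq_bigr do rewrite scalerDl -scalerA.
  by rewrite big_split -scaler_sumr /= y_vec scaler0 addr0.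
- by rewrite big_split -mulr_sumr /= y_grp mulr0 addr0.
Qed.

Lemma exists_small_frac_supp A x : unit_cube x -> integral_group_sums A x ->
  exists x', [/\ unit_cube x', forall a, a \notin frac_supp A x -> x' a = x a,
    \sum_a x' a *: vec a = \sum_a x a *: vec a,
    forall h, \sum_(a | grp a == h) x' a = \sum_(a | grp a == h) x a &
    (#|frac_supp A x'| <= 2 * d)%N].
Proof.
have [n] := ubnP #|frac_supp A x|; elim: n x => // n IH x Fx x01 xZ.
have [small|large] := leqP #|frac_supp A x| (2 * d); first by exists x.
have [x1 [x1_01 x1_out x1_vec x1_grp x1_proper]] := shrink_frac_supp x01 xZ large.
have x1Z : integral_group_sums A x1.
  move=> h; rewrite (sum_eq_off (B := frac_supp A x) _ x1_out (x1_grp h)) ?xZ //.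
  by move=> a; rewrite inE => /andP[].
have [|x2 [x2_01 x2_out x2_vec x2_grp x2_small]] := IH x1 _ x1_01 x1Z.
  by apply: leq_trans (proper_card x1_proper) _; rewrite -ltnS.
exists x2; split => //; last by move=> h; rewrite x2_grp.
- move=> a aF; rewrite -x1_out //; apply: x2_out; apply: contra aF.
  exact: (subsetP (proper_sub x1_proper)).
- by rewrite x2_vec.
Qed.

End Rounding.

Section NormBounds.
Variables (R : realType) (d : nat) (nrm : 'rV[R]_d -> R).
Hypothesis nrmP : is_norm nrm.

Lemma nrm0 : nrm 0 = 0.
Proof. by case: nrmP => _ nrmZ _; rewrite -(scale0r (0 : 'rV[R]_d)) nrmZ normr0 mul0r. Qed.

Lemma nrm_ge0 v : 0 <= nrm v.
Proof.
case: nrmP => nrmD nrmZ _; have := nrmD v (- v).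
by rewrite subrr nrm0 -scaleN1r nrmZ normrN normr1 mul1r; lra.
Qed.

Lemma nrm_sum (I : finType) (P : pred I) (f : I -> 'rV[R]_d) :
  nrm (\sum_(a | P a) f a) <= \sum_(a | P a) nrm (f a).
Proof.
case: nrmP => nrmD _ _; elim/big_rec2: _ => [|a v w _ le_vw]; first by rewrite nrm0.
by rewrite (le_trans (nrmD _ _)) // lerD2l.
Qed.

Lemma nrm_round_error (I : finType) (vec : I -> 'rV[R]_d) (A : {set I}) (x e : I -> R) :
  (forall a, nrm (vec a) <= 1) -> unit_cube x -> unit_cube e -> keeps_integral x e ->
  nrm (\sum_(a in A) (e a - x a) *: vec a) <= #|frac_supp A x|%:R.
Proof.
move=> vec_le1 x01 e01 e_keeps.
have -> : \sum_(a in A) (e a - x a) *: vec a =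
          \sum_(a in frac_supp A x) (e a - x a) *: vec a.
  rewrite (bigID (mem (frac_supp A x))) /= [X in _ + X]big1 ?addr0.
    by apply: eq_bigl => a; rewrite inE; case: (a \in A).
  move=> a /andP[aA aF]; rewrite e_keeps ?subrr ?scale0r //.
  by move: aF; rewrite inE aA.
rewrite -sum1_card natr_sum; apply: le_trans (nrm_sum _ _) (ler_sum _ _) => a _.
case: nrmP => _ nrmZ _; rewrite nrmZ mulr_ile1 ?normr_ge0 ?nrm_ge0 //.
have /andP[? ?] := x01 a; have /andP[? ?] := e01 a.
by rewrite ler_norml; apply/andP; split; lra.
Qed.

End NormBounds.

Section PrefixRounding.
Variables (R : realType) (d N : nat) (I : finType) (grp : I -> 'I_N).
Variables (vec : I -> 'rV[R]_d) (nrm : 'rV[R]_d -> R) (x0 : I -> R).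
Hypotheses (nrmP : is_norm nrm) (vec_le1 : forall a, nrm (vec a) <= 1).
Hypotheses (x0_01 : unit_cube x0)
  (x0Z : forall h, \sum_(a | grp a == h) x0 a \is a Num.int).

Definition group_prefix m := [set a | (grp a < m)%N].

Lemma sum_group_prefix_fiber m h (f : I -> R) :
  \sum_(a in group_prefix m | grp a == h) f a =
  if (h < m)%N then \sum_(a | grp a == h) f a else 0.
Proof.
case: ifPn => hm.
  by apply: eq_bigl => a; rewrite inE andb_idl // => /eqP->.
by rewrite big_pred0 // => a; rewrite inE; apply: (contraNF _ hm) => /andP[lt_am /eqP<-].
Qed.

Lemma prefix_rounding_upto n : (n <= N)%N -> exists x, [/\ unit_cube x,
    forall h, \sum_(a | grp a == h) x a = \sum_(a | grp a == h) x0 a,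
    forall m, (n <= m)%N ->
      \sum_(a in group_prefix m) x a *: vec a = \sum_(a in group_prefix m) x0 a *: vec a &
    forall e, unit_cube e -> keeps_integral x e -> forall m, (m <= n)%N ->
      nrm (\sum_(a in group_prefix m) (e a - x0 a) *: vec a) <= 2 * d%:R].
Proof.
elim: n => [_|n IH lt_nN].
  exists x0; split => // e _ _ m; rewrite leqn0 => /eqP->.
  by rewrite big_pred0 ?nrm0 ?mulr_ge0 // => a; rewrite inE ltn0.
have [x [x01 x_grp x_vec x_err]] := IH (ltnW lt_nN).
have xZ : integral_group_sums grp (group_prefix n.+1) x.
  move=> h; rewrite sum_group_prefix_fiber x_grp.
  by case: ifP => _; [exact: x0Z | exact: rpred0].
have [x' [x'01 x'_out x'_vec x'_grp x'_small]] := exists_small_frac_supp (A := group_prefix n.+1) vec x01 xZ.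
have x'_vec_prefix m : (n < m)%N ->
    \sum_(a in group_prefix m) x' a *: vec a = \sum_(a in group_prefix m) x0 a *: vec a.
  move=> lt_nm; rewrite -x_vec; last exact: ltnW.
  have := sum_eq_off (P := fun a => a \in group_prefix m) (Q := xpredT)
    (B := frac_supp (group_prefix n.+1) x)
    (f := fun a => x' a *: vec a) (g := fun a => x a *: vec a).
  rewrite !(eq_bigl _ _ (fun a => andbT (a \in group_prefix m))).
  apply=> // [a|a /x'_out-> //].
  by rewrite !inE => /andP[/leq_trans->].
exists x'; split => // [h|e e01 e_keeps m].
  by rewrite x'_grp x_grp.
have e_keeps_x : keeps_integral x e.
  move=> a xa_int; have a_out : a \notin frac_supp (group_prefix n.+1) x.
    by rewrite inE negb_and xa_int orbT.
  by rewrite e_keeps x'_out // x'_out.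
rewrite leq_eqVlt ltnS => /orP[/eqP->|le_mn]; last exact: x_err.
under eq_bigr do rewrite scalerBl.
rewrite sumrB -x'_vec_prefix // -sumrB.
under eq_bigr do rewrite -scalerBl.
apply: le_trans (nrm_round_error nrmP (group_prefix n.+1) vec_le1 x'01 e01 e_keeps) _.
by rewrite -[2 * d%:R](natrM R 2 d) ler_nat.
Qed.

Theorem prefix_rounding : exists e : I -> R, [/\ forall a, e a = 0 \/ e a = 1,
    forall h, \sum_(a | grp a == h) e a = \sum_(a | grp a == h) x0 a &
    forall m, (m <= N)%N ->
      nrm (\sum_(a in group_prefix m) (e a - x0 a) *: vec a) <= 2 * d%:R].
Proof.
have [x [x01 x_grp _ x_err]] := prefix_rounding_upto (leqnn N).
have xZ : integral_group_sums grp [set: I] x.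
  by move=> h; under eq_bigl do rewrite in_setT /=; rewrite x_grp x0Z.
(* rounding once more with no vector constraint (d = 0) leaves no fractional coordinate *)
have [e [e01 e_out _ e_grp]] := exists_small_frac_supp (fun=> 0 : 'rV[R]_0) x01 xZ.
rewrite muln0 leqn0 cards_eq0 => /eqP e_int.
have e_bool a : e a = 0 \/ e a = 1.
  apply: nfrac01 (e01 a) _; apply: contraFN (in_set0 a) => ea.
  by rewrite -e_int !inE.
exists e; split => // [h|m le_mN]; first by rewrite e_grp x_grp.
apply: x_err => // a xa_int; apply: e_out.
by rewrite inE negb_and xa_int orbT.
Qed.

End PrefixRounding.

Local Open Scope fset_scope.

Lemma big_fsetval (T : choiceType) (M : nmodType) (S : {fset T}) (b : pred S)
    (F : T -> M) :
  \sum_(v <- [fset val j | j : S & b j]) F v = \sum_(j : S | b j) F (val j).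
Proof.
by rewrite big_imfset /= ?big_filter ?big_enum_cond //; move=> ? ? _ _; apply: val_inj.
Qed.

Lemma sum_indicator (R : nzRingType) (T : finType) (M : lmodType R) (e : T -> R)
    (F : T -> M) :
  (forall j, e j = 0 \/ e j = 1) -> \sum_(j | e j == 1) F j = \sum_j e j *: F j.
Proof.
move=> e01; rewrite big_mkcond; apply: eq_bigr => j _.
by case: (e01 j) => ->; rewrite ?eqxx ?scale1r // eq_sym oner_eq0 scale0r.
Qed.

Section Subfamilies.
Variables (R : realType) (d N : nat) (V : 'I_N -> {fset 'rV[R]_d}).
Variables (e : {i : 'I_N & V i} -> R).
Hypothesis e01 : forall p, e p = 0 \/ e p = 1.

Lemma sum_tagged (M : nmodType) (P : pred 'I_N) (g : {i : 'I_N & V i} -> M) :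
  \sum_(i | P i) \sum_(j : V i) g (Tagged (fun i => V i) j) = \sum_(p | P (tag p)) g p.
Proof. by rewrite sig_big_dep; apply: eq_big => [p|[i j] _] //; rewrite andbT. Qed.

Lemma sum_tag_eq (M : nmodType) i (g : {i : 'I_N & V i} -> M) :
  \sum_(p | tag p == i) g p = \sum_(j : V i) g (Tagged (fun i => V i) j).
Proof. by rewrite -(sum_tagged (pred1 i)) big_pred1_eq. Qed.

Definition indicated_subset i := [fset val j | j : V i & e (Tagged (fun i => V i) j) == 1].

Lemma indicated_subset_sub i : indicated_subset i `<=` V i.
Proof. by apply/fsubsetP => _ /imfsetP[j _ ->]; exact: fsvalP. Qed.

Lemma sum_indicated_subset (M : lmodType R) (F : 'rV[R]_d -> M) i :
  \sum_(v <- indicated_subset i) F v = \sum_(j : V i) e (Tagged (fun i => V i) j) *: F (val j).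
Proof. by rewrite big_fsetval sum_indicator. Qed.

Lemma card_indicated_subset i : (#|` indicated_subset i|)%:R = \sum_(p | tag p == i) e p.
Proof.
rewrite card_fset_sum1 natr_sum sum_tag_eq.
rewrite (sum_indicated_subset (M := R^o) (fun=> 1)).
by apply: eq_bigr => j _; rewrite -[RHS]mulr1.
Qed.

Lemma indicated_subset_discrepancy (P : pred 'I_N) (c : 'I_N -> R) :
  \sum_(i | P i) (\sum_(v <- indicated_subset i) v - c i *: \sum_(v <- V i) v) =
  \sum_(p | P (tag p)) (e p - c (tag p)) *: val (tagged p).
Proof.
rewrite -sum_tagged; apply: eq_bigr => i _.
rewrite sum_indicated_subset big_seq_fsetE /= scaler_sumr -sumrB.
by apply: eq_bigr => j _; rewrite scalerBl.
Qed.

End Subfamilies.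

Theorem lemma5 (R : realType) (d N r : nat) (nrm : 'rV[R]_d -> R)
  (V : 'I_N -> {fset 'rV[R]_d}) :
  (0 < d)%N -> (0 < N)%N -> (2 <= r)%N ->
  is_norm nrm ->
  (forall i, forall v, v \in V i -> nrm v <= 1) ->
  (forall i, (r <= #|` V i|)%N) ->
  forall k : nat, (1 <= k <= r)%N ->
  exists U : 'I_N -> {fset 'rV[R]_d},
    (forall i, U i `<=` V i) /\ (forall i, #|` U i| = k) /\
    (forall n : nat, (1 <= n <= N)%N ->
       nrm (\sum_(i < N | (i < n)%N)
              (\sum_(v <- U i) v
               - (k%:R / (#|` V i|)%:R) *: \sum_(v <- V i) v))
       <= 2 * d%:R).
Proof.
move=> _ _ r_ge2 nrmP V_le1 V_ge_r k /andP[_ k_le_r].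
pose c i : R := k%:R / (#|` V i|)%:R.
have V_gt0 i : (0 < #|` V i|)%N by have := V_ge_r i; lia.
have c01 : unit_cube (fun p : {i & V i} => c (tag p)).
  move=> p; rewrite divr_ge0 ?ler0n //= ler_pdivrMr ?ltr0n // mul1r ler_nat.
  exact: leq_trans k_le_r (V_ge_r _).
have c_group i : \sum_(p : {i & V i} | tag p == i) c (tag p) = k%:R.
  rewrite sum_tag_eq /= sumr_const -cardfE -[c i *+ _]mulr_natr /c.
  by rewrite divfK // pnatr_eq0 -lt0n.
have cZ i : \sum_(p : {i & V i} | tag p == i) c (tag p) \is a Num.int.
  by rewrite c_group natr_int.
have [e [e01 e_grp e_err]] := prefix_rounding (grp := tag) (vec := fun p => val (tagged p))
  nrmP (fun p => V_le1 _ _ (fsvalP (tagged p))) c01 cZ.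
exists (indicated_subset e); split; first exact: indicated_subset_sub.
split=> [i|n /andP[_ le_nN]].
  by apply/eqP; rewrite -(eqr_nat R) card_indicated_subset // e_grp c_group.
rewrite indicated_subset_discrepancy //; apply: le_trans (e_err n le_nN).
by rewrite (eq_bigl (fun p => p \in group_prefix tag n)) // => p; rewrite inE.
Qed.
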